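(* Let $h(x)$ be a $\Sigma_{ms}$-term whose only variable (if any) is $x$, interpreted as a function on the rationals in $Q_0(\mathbf s)$. Then there exist a rational number $r$ and a $\Sigma_m$-term $g(x)$ (no sign symbol) whose only variable is $x$, such that for every rational $q>r$, $h(q)=g(q)$ (evaluated in $Q_0(\mathbf s)$ and $Q_0$ respectively).
   Context: $\Sigma_m=(0,1,+,\cdot,-,{}^{-1})$ and $\Sigma_{ms}=\Sigma_m$ extended with a unary symbol $\mathbf s$. $Q_0$ is the field of rational numbers with its usual $0,1,+,\cdot,-$ and the total inverse $q^{-1}=1/q$ for $q\neq0$, $0^{-1}=0$. $Q_0(\mathbf s)$ is $Q_0$ expanded with the sign function $\mathbf s(q)=-1$ if $q<0$, $0$ if $q=0$, $1$ if $q>0$. *)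

From HB Require Import structures.
From mathcomp Require Import all_boot all_order all_algebra.
Set Implicit Arguments. Unset Strict Implicit. Unset Printing Implicit Defensive.
Import Order.TTheory GRing.Theory Num.Theory.
Local Open Scope ring_scope.

(* Terms over the signature Sigma_ms = (0,1,+,*,-,^-1,s) in the single
   variable x.  Terms of Sigma_m are those not containing [TSgn]. *)
Inductive term : Type :=
  | TVar : term
  | TZero : term
  | TOne : term
  | TAdd : term -> term -> term
  | TMul : term -> term -> term
  | TOpp : term -> term
  | TInv : term -> term
  | TSgn : term -> term.

Definition sgnq (q : rat) : rat := if q < 0 then -1 else if q == 0 then 0 else 1.

(* Evaluation in Q_0(s) at x := q.  The inverse is mathcomp's rat inverse,
   which is total with 0^-1 = 0 (see lemma [invq0_check]). *)
Fixpoint eval (t : term) (q : rat) : rat :=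
  match t with
  | TVar => q
  | TZero => 0
  | TOne => 1
  | TAdd a b => eval a q + eval b q
  | TMul a b => eval a q * eval b q
  | TOpp a => - eval a q
  | TInv a => (eval a q)^-1
  | TSgn a => sgnq (eval a q)
  end.

Fixpoint sign_free (t : term) : bool :=
  match t with
  | TVar | TZero | TOne => true
  | TAdd a b | TMul a b => sign_free a && sign_free b
  | TOpp a | TInv a => sign_free a
  | TSgn _ => false
  end.

Lemma invq0_check : (0 : rat)^-1 = 0.
Proof. exact: invr0. Qed.

From mathcomp Require Import all_boot all_order all_algebra.
From mathcomp Require Import lra.
Set Implicit Arguments. Unset Strict Implicit. Unset Printing Implicit Defensive.
Import Order.TTheory GRing.Theory Num.Theory.
Local Open Scope ring_scope.

(* The function defined by a Sigma_ms-term agrees, for all sufficiently large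
   rationals, with a quotient of two polynomials.  The only interesting case is
   the sign symbol: a nonzero polynomial eventually has the sign of its leading
   coefficient (it is dominated by its leading monomial), so the sign of a
   rational function is eventually a constant, which is again a rational
   function.  Conversely every rational function with rational coefficients is
   defined by a Sigma_m-term, built from Horner's scheme and numerals
   num / den. *)

Definition eventually (P : rat -> Prop) : Prop :=
  exists r : rat, forall q : rat, r < q -> P q.

Lemma eventually_gt (r : rat) : eventually (fun q => r < q).
Proof. by exists r. Qed.

Lemma eventually_and (P Q : rat -> Prop) :
  eventually P -> eventually Q -> eventually (fun q => P q /\ Q q).
Proof.
move=> [r1 HP] [r2 HQ]; exists (Num.max r1 r2) => q.
by rewrite gt_max => /andP[/HP ? /HQ ?].
Qed.

Lemma eventually_mono (P Q : rat -> Prop) :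
  eventually P -> (forall q, P q -> Q q) -> eventually Q.
Proof. by move=> [r HP] PQ; exists r => q /HP /PQ. Qed.

Lemma sgnqE (q : rat) : sgnq q = Num.sg q.
Proof. by rewrite /sgnq; case: sgrP. Qed.

(* Induction on p = p' * X + c: for q > 1 + |l c| / m the term l p'(q) q >= m q
   absorbs the constant l c. *)
Lemma poly_eventually_lead (p : {poly rat}) : p != 0 ->
  exists2 m : rat, 0 < m & eventually (fun q => m <= lead_coef p * p.[q]).
Proof.
elim/poly_ind: p => [|p c IH]; first by rewrite eqxx.
have [->|pn0 _] := eqVneq p 0.
  rewrite mul0r add0r polyC_eq0 => cn0; exists (c * c).
    by rewrite lt_def mulf_neq0 // -expr2 sqr_ge0.
  by exists 0 => q _; rewrite lead_coefC hornerC.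
have [m m_gt0 m_le_ev] := IH pn0.
have -> : lead_coef (p * 'X + c%:P) = lead_coef p.
  rewrite lead_coefDl ?lead_coefMX // size_polyC size_mulX //.
  by case: (c != 0); rewrite // ltnS lt0n size_poly_eq0.
set l := lead_coef p in m_le_ev *; exists m => //.
have lc_small (q : rat) : 1 + `|l * c| / m < q -> `|l * c| < m * (q - 1).
  by rewrite addrC -ltrBrDr ltr_pdivrMr // [_ * m]mulrC.
apply: (eventually_mono (eventually_and m_le_ev (eventually_gt (1 + `|l * c| / m)))).
move=> q [m_le /[dup] q_large /lc_small lc_le].
have q_ge1 : 1 <= q.
  apply/ltW/(le_lt_trans _ q_large); by rewrite lerDl divr_ge0 // ltW.
have lc_ge : - `|l * c| <= l * c by rewrite lerNl -normrN ler_norm.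
rewrite hornerD hornerMX hornerC; nra.
Qed.

Lemma sg_eq_of_mul_gt0 (R : realDomainType) (l x : R) :
  0 < l * x -> Num.sg x = Num.sg l.
Proof.
case: (ltrgtP l 0) => [l_lt0|l_gt0|->]; last by rewrite mul0r ltxx.
- by rewrite nmulr_rgt0 // => x_lt0; rewrite !ltr0_sg.
- by rewrite pmulr_rgt0 // => x_gt0; rewrite !gtr0_sg.
Qed.

Lemma poly_eventually_sg (p : {poly rat}) : p != 0 ->
  eventually (fun q => Num.sg p.[q] = Num.sg (lead_coef p)).
Proof.
move=> /poly_eventually_lead [m m_gt0 large].
apply: (eventually_mono large) => q m_le.
by apply: sg_eq_of_mul_gt0; apply: lt_le_trans m_le.
Qed.

Lemma poly_eventually_neq0 (p : {poly rat}) : p != 0 ->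
  eventually (fun q => p.[q] != 0).
Proof.
move=> p_neq0; apply: (eventually_mono (poly_eventually_sg p_neq0)) => q sg_eq.
by rewrite -sgr_eq0 sg_eq sgr_eq0 lead_coef_eq0.
Qed.

Definition eventually_rational (f : rat -> rat) : Prop :=
  exists P Q : {poly rat}, Q != 0 /\ eventually (fun q => f q = P.[q] / Q.[q]).

Lemma rational_of_poly (P : {poly rat}) (f : rat -> rat) :
  eventually (fun q => f q = P.[q]) -> eventually_rational f.
Proof.
move=> fE; exists P, 1; split; first exact: oner_neq0.
by apply: (eventually_mono fE) => q ->; rewrite hornerC divr1.
Qed.

(* The sum of two fractions is a fraction once both denominators are nonzero;
   this is where the eventual nonvanishing of denominators is needed. *)
Lemma rational_add (f g : rat -> rat) :
  eventually_rational f -> eventually_rational g ->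
  eventually_rational (fun q => f q + g q).
Proof.
move=> [P1 [Q1 [Q1_neq0 fE]]] [P2 [Q2 [Q2_neq0 gE]]].
exists (P1 * Q2 + P2 * Q1), (Q1 * Q2); split; first by rewrite mulf_neq0.
have Qs_neq0 := eventually_and (poly_eventually_neq0 Q1_neq0)
                               (poly_eventually_neq0 Q2_neq0).
apply: (eventually_mono (eventually_and Qs_neq0 (eventually_and fE gE))).
move=> q [[Q1q_neq0 Q2q_neq0] [-> ->]].
by rewrite addf_div // !(hornerD, hornerM).
Qed.

Lemma rational_mul (f g : rat -> rat) :
  eventually_rational f -> eventually_rational g ->
  eventually_rational (fun q => f q * g q).
Proof.
move=> [P1 [Q1 [Q1_neq0 fE]]] [P2 [Q2 [Q2_neq0 gE]]].
exists (P1 * P2), (Q1 * Q2); split; first by rewrite mulf_neq0.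
apply: (eventually_mono (eventually_and fE gE)) => q [-> ->].
by rewrite mulf_div !hornerM.
Qed.

Lemma rational_opp (f : rat -> rat) :
  eventually_rational f -> eventually_rational (fun q => - f q).
Proof.
move=> [P [Q [Q_neq0 fE]]]; exists (- P), Q; split=> //.
by apply: (eventually_mono fE) => q ->; rewrite hornerN mulNr.
Qed.

(* Inversion swaps numerator and denominator, unless the numerator is 0, in
   which case the function is eventually 0 (recall 0^-1 = 0). *)
Lemma rational_inv (f : rat -> rat) :
  eventually_rational f -> eventually_rational (fun q => (f q)^-1).
Proof.
move=> [P [Q [Q_neq0 fE]]]; have [P0|P_neq0] := eqVneq P 0.
  exists 0, 1; split; first exact: oner_neq0.
  by apply: (eventually_mono fE) => q ->; rewrite P0 !hornerC !mul0r invr0.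
exists Q, P; split=> //.
by apply: (eventually_mono fE) => q ->; rewrite invf_div.
Qed.

Lemma rational_sgn (f : rat -> rat) :
  eventually_rational f -> eventually_rational (fun q => sgnq (f q)).
Proof.
move=> [P [Q [Q_neq0 fE]]]; have [P0|P_neq0] := eqVneq P 0.
  apply: (rational_of_poly (P := 0)); apply: (eventually_mono fE) => q ->.
  by rewrite P0 !hornerC mul0r sgnqE sgr0.
apply: (rational_of_poly (P := (Num.sg (lead_coef P) * Num.sg (lead_coef Q))%:P)).
have sgs := eventually_and (poly_eventually_sg P_neq0) (poly_eventually_sg Q_neq0).
apply: (eventually_mono (eventually_and sgs fE)) => q [[sgP sgQ] ->].
by rewrite hornerC sgnqE sgrM sgrV sgP sgQ.
Qed.

Lemma term_eventually_rational (h : term) : eventually_rational (eval h).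
Proof.
elim: h => /= [||| a IHa b IHb | a IHa b IHb | a IHa | a IHa | a IHa].
- by apply: (rational_of_poly (P := 'X)); exists 0 => q _; rewrite hornerX.
- by apply: (rational_of_poly (P := 0)); exists 0 => q _; rewrite hornerC.
- by apply: (rational_of_poly (P := 1)); exists 0 => q _; rewrite hornerC.
- exact: rational_add.
- exact: rational_mul.
- exact: rational_opp.
- exact: rational_inv.
- exact: rational_sgn.
Qed.

Fixpoint nat_term (n : nat) : term :=
  if n is n'.+1 then TAdd TOne (nat_term n') else TZero.

Definition int_term (z : int) : term :=
  match z with Posz n => nat_term n | Negz n => TOpp (nat_term n.+1) end.

Definition rat_term (c : rat) : term :=
  TMul (int_term (numq c)) (TInv (int_term (denq c))).

Definition poly_term (p : {poly rat}) : term :=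
  foldr (fun c t => TAdd (TMul t TVar) (rat_term c)) TZero p.

Definition rfun_term (P Q : {poly rat}) : term :=
  TMul (poly_term P) (TInv (poly_term Q)).

Lemma eval_nat_term (n : nat) (q : rat) : eval (nat_term n) q = n%:R.
Proof. by elim: n => //= n ->; rewrite -mulrS. Qed.

Lemma eval_int_term (z : int) (q : rat) : eval (int_term z) q = z%:~R.
Proof.
case: z => n; first exact: eval_nat_term.
exact: (congr1 -%R (eval_nat_term n.+1 q)).
Qed.

Lemma eval_rat_term (c : rat) (q : rat) : eval (rat_term c) q = c.
Proof. by rewrite /= !eval_int_term divq_num_den. Qed.

Lemma eval_rfun_term (P Q : {poly rat}) (q : rat) :
  eval (rfun_term P Q) q = P.[q] / Q.[q].
Proof.
suff poly_termE (p : {poly rat}) : eval (poly_term p) q = p.[q].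
  by rewrite /= !poly_termE.
rewrite /poly_term /horner; elim: (polyseq p) => // c s IH.
exact: (congr2 (fun a b => a * q + b) IH (eval_rat_term c q)).
Qed.

Lemma rfun_term_sign_free (P Q : {poly rat}) : sign_free (rfun_term P Q).
Proof.
have int_free (z : int) : sign_free (int_term z).
  by case: z => n; elim: n.
suff poly_free (p : {poly rat}) : sign_free (poly_term p).
  by rewrite /= !poly_free.
by rewrite /poly_term; elim: (polyseq p) => //= c s ->; rewrite !int_free.
Qed.

Theorem theorem4 (h : term) :
  exists (r : rat) (g : term),
    sign_free g /\ (forall q : rat, r < q -> eval h q = eval g q).
Proof.
have [P [Q [_ [r hE]]]] := term_eventually_rational h.
exists r, (rfun_term P Q); split; first exact: rfun_term_sign_free.
by move=> q /hE ->; rewrite eval_rfun_term.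
Qed.
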